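(* Let $k\ge 2$, $w=2^k-1$, $v=2^{k-1}$. Consider a rectangular region of cells $(c,r)$ with columns $c\in\{0,\dots,2v-1\}$ and rows $r\in\{-1,0,\dots,w\}$ (rows increase downward), all cells outside this region being unavailable. Row $-1$: the frog stands on $(0,-1)$ and all other cells of the row are blocked. Rows $0,\dots,w-1$: all cells empty. Row $w$: cells $(0,w)$ and $(2v-1,w)$ are empty, all others blocked. For $j\ge1$ let $\tilde U_j$ be the sequence of $2^j-1$ vertical jumps $(0,1)$ followed by one vertical jump $(0,2^j+2^{j-1}-1)$, and $\tilde U_j^R$ its reverse. Let $\tilde V'=\tilde U_{k-1},\dots,\tilde U_1$ and $\tilde V''=\tilde U_1^R,\dots,\tilde U_{k-1}^R$, and consider the jump sequence $$\tilde V=(0,v),\ \tilde V',\ (1,0),\ \tilde V'',\ (1,0),\ \tilde V',\ (1,0),\ \tilde V'',\ (1,0),\ \dots,\ (1,0),\ \tilde V',\ (1,0),\ \tilde V'',\ (0,v),\ (2v-1,0),$$ which contains $v$ blocks of the form $\tilde V',(1,0),\tilde V''$ separated by single jumps $(1,0)$. Then for every choice of pairwise distinct even rows $r_1,\dots,r_v\in\{0,2,\dots,w-1\}$ there is a valid execution of $\tilde V$ in which, for each $i=1,\dots,v$, the jump $(1,0)$ inside the $i$-th block is made within row $r_i$, and at the end all cells of rows $0,\dots,w-1$ and the cell $(2v-1,w)$ are visited and the frog stands on $(0,w)$.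
   Context: A frog on a grid performs a given sequence of jumps $(dx,dy)$; for each jump it chooses a sign $s\in\{-1,+1\}$ and moves from $(x,y)$ to $(x+s\,dx,\,y+s\,dy)$. An execution is valid if every landing cell is an available (non-blocked) cell of the region that has not been visited before (the starting cell counts as visited). *)

From Stdlib Require Import ZArith List Lia.
Import ListNotations.
Open Scope Z_scope.

Definition cell := (Z * Z)%type.   (* (column, row); rows increase downward *)
Definition jump := (Z * Z)%type.   (* (dx, dy) *)

Definition sgn (b : bool) : Z := if b then 1 else -1.

Definition step (p : cell) (b : bool) (d : jump) : cell :=
  (fst p + sgn b * fst d, snd p + sgn b * snd d).

Fixpoint landings (p : cell) (js : list jump) (ss : list bool) : list cell :=
  match js, ss with
  | d :: js', b :: ss' => let q := step p b d in q :: landings q js' ss'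
  | _, _ => []
  end.

Fixpoint valid_exec (avail : cell -> Prop) (visited : list cell) (p : cell)
    (js : list jump) (ss : list bool) : Prop :=
  match js, ss with
  | [], [] => True
  | d :: js', b :: ss' =>
      let q := step p b d in
      avail q /\ ~ In q visited /\ valid_exec avail (q :: visited) q js' ss'
  | _, _ => False
  end.

Definition vN (k : nat) : nat := Nat.pow 2 (k - 1).
Definition vZ (k : nat) : Z := Z.of_nat (vN k).
Definition wZ (k : nat) : Z := 2 ^ Z.of_nat k - 1.

Definition avail (k : nat) (x : cell) : Prop :=
  let c := fst x in let r := snd x in
  0 <= c < 2 * vZ k /\
  ( (r = -1 /\ c = 0)
  \/ (0 <= r < wZ k)
  \/ (r = wZ k /\ (c = 0 \/ c = 2 * vZ k - 1)) ).

Definition start : cell := (0, -1).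

Definition Ut (j : nat) : list jump :=
  repeat (0, 1) (Nat.pow 2 j - 1) ++
  [(0, 2 ^ Z.of_nat j + 2 ^ (Z.of_nat j - 1) - 1)].
Definition UtR (j : nat) : list jump := rev (Ut j).

Definition Vp (k : nat) : list jump := concat (map Ut (rev (seq 1 (k - 1)))).
Definition Vpp (k : nat) : list jump := concat (map UtR (seq 1 (k - 1))).

Definition block (k : nat) : list jump := Vp k ++ [(1, 0)] ++ Vpp k.

Definition Vt (k : nat) : list jump :=
  [(0, vZ k)] ++ block k ++
  concat (repeat ([(1, 0)] ++ block k) (vN k - 1)) ++
  [(0, vZ k); (2 * vZ k - 1, 0)].

(* 0-based index in V~ of the jump (1,0) inside the i-th block (i >= 1). *)
Definition mid_index (k i : nat) : nat :=
  (1 + (i - 1) * (length (block k) + 1) + length (Vp k))%nat.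

(* A run of [U~_j, ..., U~_1] started on the middle cell of a window of
   [2^(j+1) - 1] rows of one column visits the whole window: the [2^j - 1] unit
   jumps sweep one half together with the middle cell, and the long jump
   [(0, 3 * 2^(j-1) - 1)] lands on the middle cell of the other half, where
   induction takes over.  Choosing which half is swept first steers the run to
   end on any prescribed even row; the second choice is the point reflection of
   the first.  [V~''] is [V~'] reversed, so run backwards it sweeps the next
   column from that row back to its middle.  Thus each block [V~', (1,0), V~'']
   covers a pair of columns, crossing in the prescribed row, and the blocks,
   joined by the jumps [(1,0)], preceded by [(0,v)] and followed by [(0,v)],
   [(2v-1,0)], visit every available cell exactly once. *)

From Stdlib Require Import ZArith List Lia.
Import ListNotations.
Open Scope Z_scope.

Lemma last_cons {A} (a : A) l d : last (a :: l) d = last l a.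
Proof.
  revert a d; induction l as [|x l IH]; intros a d; [reflexivity|].
  change (last (x :: l) d = last (x :: l) a). now rewrite (IH x d), (IH x a).
Qed.

Lemma last_app {A} (l1 l2 : list A) d : last (l1 ++ l2) d = last l2 (last l1 d).
Proof.
  revert d; induction l1 as [|a l1 IH]; intro d; [reflexivity|].
  rewrite <- app_comm_cons, !last_cons. apply IH.
Qed.

Lemma landings_length p js ss :
  length ss = length js -> length (landings p js ss) = length js.
Proof.
  revert p ss; induction js as [|d js IH]; intros p [|b ss] H; cbn in *; try lia.
  f_equal; apply IH; lia.
Qed.

Lemma landings_app p js1 js2 ss1 ss2 : length ss1 = length js1 ->
  landings p (js1 ++ js2) (ss1 ++ ss2) =
  landings p js1 ss1 ++ landings (last (landings p js1 ss1) p) js2 ss2.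
Proof.
  revert p ss1; induction js1 as [|d js IH]; intros p [|b ss] H;
    cbn [length app landings] in *; try lia.
  - reflexivity.
  - rewrite IH, last_cons by lia. reflexivity.
Qed.

Lemma nth_landings_app_l p js1 js2 ss1 ss2 i x0 :
  length ss1 = length js1 -> (i < length js1)%nat ->
  nth i (landings p (js1 ++ js2) (ss1 ++ ss2)) x0 = nth i (landings p js1 ss1) x0.
Proof.
  intros Hl Hi. rewrite landings_app by exact Hl.
  apply app_nth1. now rewrite landings_length.
Qed.

Lemma nth_landings_app_r p js1 js2 ss1 ss2 i x0 : length ss1 = length js1 ->
  nth (length js1 + i) (landings p (js1 ++ js2) (ss1 ++ ss2)) x0 =
  nth i (landings (last (landings p js1 ss1) p) js2 ss2) x0.
Proof.
  intro Hl. rewrite landings_app by exact Hl.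
  rewrite <- (landings_length p js1 ss1) by exact Hl. apply app_nth2_plus.
Qed.

Lemma valid_exec_of_NoDup av vis p js ss : length ss = length js ->
  NoDup (landings p js ss) ->
  (forall x, In x (landings p js ss) -> av x /\ ~ In x vis) ->
  valid_exec av vis p js ss.
Proof.
  revert vis p ss; induction js as [|d js IH]; intros vis p [|b ss] Hl Hnd Hx;
    cbn in *; try lia; auto.
  inversion_clear Hnd as [|? ? Hnin Hnd'].
  destruct (Hx _ (or_introl eq_refl)) as [Hav Hvis].
  repeat split; auto. apply IH; [lia|exact Hnd'|].
  intros x Hin. split; [apply Hx; auto|].
  intros [<-|Hv]; [contradiction|]. exact (proj2 (Hx x (or_intror Hin)) Hv).
Qed.

Definition trail (p : cell) (js : list jump) (ss : list bool) : list cell :=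
  p :: landings p js ss.

Definition sweep (js : list jump) (ss : list bool) (p q : cell) (S : cell -> Prop) : Prop :=
  length ss = length js /\ last (landings p js ss) p = q /\
  NoDup (trail p js ss) /\ forall x, In x (trail p js ss) <-> S x.

Lemma sweep_ext js ss p q (S T : cell -> Prop) :
  (forall x, S x <-> T x) -> sweep js ss p q S -> sweep js ss p q T.
Proof.
  intros HST (Hl & Hq & Hnd & HS). repeat (split; [assumption|]).
  intro y. rewrite HS. apply HST.
Qed.

Lemma sweep_nil p : sweep [] [] p p (fun x => x = p).
Proof. repeat split; cbn; [repeat constructor; tauto|intuition|intuition]. Qed.

Lemma sweep_join js1 ss1 p q S1 d b q' js2 ss2 r S2 (S : cell -> Prop) :
  sweep js1 ss1 p q S1 -> step q b d = q' -> sweep js2 ss2 q' r S2 ->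
  (forall x, S1 x -> S2 x -> False) -> (forall x, S x <-> S1 x \/ S2 x) ->
  sweep (js1 ++ d :: js2) (ss1 ++ b :: ss2) p r S.
Proof.
  intros (Hl1 & Hq & Hnd1 & HS1) Hq' (Hl2 & Hr & Hnd2 & HS2) Hdisj HS.
  assert (Htrail : trail p (js1 ++ d :: js2) (ss1 ++ b :: ss2) =
                   trail p js1 ss1 ++ trail q' js2 ss2).
  { unfold trail. rewrite landings_app, Hq by exact Hl1. cbn [landings]. now rewrite Hq'. }
  split; [|split; [|split]].
  - rewrite !length_app; cbn; lia.
  - rewrite landings_app, Hq, last_app by exact Hl1. cbn [landings]. now rewrite last_cons, Hq'.
  - rewrite Htrail. apply NoDup_app; auto.
    intros x H1 H2. apply (Hdisj x); [apply HS1|apply HS2]; auto.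
  - intro x. rewrite Htrail, in_app_iff, HS1, HS2, HS. reflexivity.
Qed.

Lemma sgn_negb b : sgn (negb b) = - sgn b.
Proof. now destruct b. Qed.

Lemma step_negb p b d : step (step p b d) (negb b) d = p.
Proof. destruct p as [x y]; unfold step; cbn; rewrite sgn_negb; f_equal; ring. Qed.

Lemma trail_rev p js ss : length ss = length js ->
  trail (last (landings p js ss) p) (rev js) (map negb (rev ss)) = rev (trail p js ss).
Proof.
  revert p ss; induction js as [|d js IH]; intros p [|b ss] Hl;
    cbn [length rev map landings] in *; try lia.
  - reflexivity.
  - set (q := step p b d). rewrite last_cons, map_app.
    set (e := last (landings q js ss) q).
    specialize (IH q ss ltac:(lia)). fold e in IH.
    assert (Hl' : length (map negb (rev ss)) = length (rev js))
      by (rewrite length_map, !length_rev; lia).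
    assert (He : last (landings e (rev js) (map negb (rev ss))) e = q).
    { rewrite <- (last_cons e _ e). change (last (trail e (rev js) (map negb (rev ss))) e = q).
      rewrite IH. unfold trail. cbn [rev]. apply last_last. }
    change (e :: landings e (rev js ++ [d]) (map negb (rev ss) ++ [negb b]) =
            rev (q :: landings q js ss) ++ [p]).
    rewrite landings_app, He, app_comm_cons by exact Hl'.
    cbn [landings]. subst q. rewrite step_negb. f_equal. exact IH.
Qed.

Lemma sweep_rev js ss p q S :
  sweep js ss p q S -> sweep (rev js) (map negb (rev ss)) q p S.
Proof.
  intros (Hl & Hq & Hnd & HS).
  pose proof (trail_rev p js ss Hl) as Hrev. rewrite Hq in Hrev.
  split; [|split; [|split]].
  - rewrite length_map, !length_rev. exact Hl.
  - rewrite <- (last_cons q _ q). change (last (trail q (rev js) (map negb (rev ss))) q = p).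
    rewrite Hrev. unfold trail. cbn [rev]. apply last_last.
  - rewrite Hrev. apply NoDup_rev, Hnd.
  - intro x. rewrite Hrev, <- in_rev. apply HS.
Qed.

Lemma last_map {A B} (f : A -> B) l d : last (map f l) (f d) = f (last l d).
Proof.
  revert d; induction l as [|a l IH]; intro d; [reflexivity|].
  cbn [map]. rewrite !last_cons. apply IH.
Qed.

(* Point reflection through [o / 2]; it reverses the direction of every jump. *)
Definition reflect (o x : cell) : cell := (fst o - fst x, snd o - snd x).

Lemma reflect_involutive o x : reflect o (reflect o x) = x.
Proof. destruct x; unfold reflect; cbn; f_equal; ring. Qed.

Lemma step_reflect o p b d : step (reflect o p) (negb b) d = reflect o (step p b d).
Proof. unfold step, reflect; cbn; rewrite sgn_negb; f_equal; ring. Qed.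

Lemma landings_reflect o p js ss :
  landings (reflect o p) js (map negb ss) = map (reflect o) (landings p js ss).
Proof.
  revert p ss; induction js as [|d js IH]; intros p [|b ss]; try reflexivity.
  cbn [map landings]. rewrite step_reflect, IH. reflexivity.
Qed.

Lemma sweep_reflect o js ss p q S : sweep js ss p q S ->
  sweep js (map negb ss) (reflect o p) (reflect o q) (fun x => S (reflect o x)).
Proof.
  intros (Hl & Hq & Hnd & HS).
  assert (Ht : trail (reflect o p) js (map negb ss) = map (reflect o) (trail p js ss)).
  { unfold trail. now rewrite landings_reflect. }
  split; [|split; [|split]].
  - now rewrite length_map.
  - now rewrite landings_reflect, last_map, Hq.
  - rewrite Ht. apply (NoDup_map_inv (reflect o)).
    now rewrite map_map, (map_ext _ _ (reflect_involutive o)), map_id.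
  - intro x. rewrite Ht, <- HS, in_map_iff. split.
    + intros (y & <- & Hy). now rewrite reflect_involutive.
    + intro Hx. exists (reflect o x). now rewrite reflect_involutive.
Qed.

Lemma valid_exec_of_sweep av js ss p q S :
  sweep js ss p q S -> (forall x, S x -> av x) -> valid_exec av [p] p js ss.
Proof.
  intros (Hl & _ & Hnd & HS) Hav. inversion_clear Hnd as [|? ? Hp Hnd'].
  apply valid_exec_of_NoDup; auto.
  intros x Hx. split.
  - apply Hav, HS. now right.
  - intros [<-|[]]. contradiction.
Qed.

Lemma step_vertical x y b dy : step (x, y) b (0, dy) = (x, y + sgn b * dy).
Proof. unfold step; cbn [fst snd]; f_equal; ring. Qed.

Lemma step_right x y : step (x, y) true (1, 0) = (x + 1, y).
Proof. unfold step; cbn [fst snd sgn]; f_equal; ring. Qed.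

Definition box (c1 c2 r1 r2 : Z) (x : cell) : Prop :=
  c1 <= fst x <= c2 /\ r1 <= snd x <= r2.

Ltac solve_cells :=
  intros [? ?]; unfold box; cbn [fst snd]; try unfold cell; rewrite ?pair_equal_spec;
  first [split; intros; lia | intros; lia].

Lemma sweep_units c y n :
  sweep (repeat (0, 1) n) (repeat true n) (c, y) (c, y + Z.of_nat n) (box c c y (y + Z.of_nat n)).
Proof.
  revert y; induction n as [|n IH]; intro y.
  - rewrite Z.add_0_r. eapply sweep_ext; [|apply sweep_nil]. solve_cells.
  - change (sweep ([] ++ (0, 1) :: repeat (0, 1) n) ([] ++ true :: repeat true n)
                  (c, y) (c, y + Z.of_nat (S n)) (box c c y (y + Z.of_nat (S n)))).
    replace (y + Z.of_nat (S n)) with (y + 1 + Z.of_nat n) by lia.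
    eapply sweep_join; [apply sweep_nil| |apply (IH (y + 1))| |].
    + apply step_vertical.
    + solve_cells.
    + solve_cells.
Qed.

Lemma pow2_ge_1 n : 1 <= 2 ^ Z.of_nat n.
Proof. pose proof (Z.pow_pos_nonneg 2 (Z.of_nat n)). lia. Qed.

Lemma pow2_succ n : 2 ^ Z.of_nat (S n) = 2 * 2 ^ Z.of_nat n.
Proof. rewrite Nat2Z.inj_succ, Z.pow_succ_r by lia. reflexivity. Qed.

Lemma of_nat_pow2_pred n : Z.of_nat (Nat.pow 2 n - 1) = 2 ^ Z.of_nat n - 1.
Proof.
  pose proof (Nat.pow_nonzero 2 n ltac:(lia)).
  rewrite Nat2Z.inj_sub, Nat2Z.inj_pow by lia. reflexivity.
Qed.

Lemma Ut_succ n :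
  Ut (S n) = repeat (0, 1) (Nat.pow 2 (S n) - 1) ++ [(0, 3 * 2 ^ Z.of_nat n - 1)].
Proof.
  unfold Ut. do 3 f_equal.
  replace (Z.of_nat (S n) - 1) with (Z.of_nat n) by lia. rewrite pow2_succ. ring.
Qed.

Lemma Vp_succ_succ n : Vp (S (S n)) = Ut (S n) ++ Vp (S n).
Proof.
  unfold Vp. replace (S (S n) - 1)%nat with (S n) by lia.
  replace (S n - 1)%nat with n by lia.
  rewrite seq_S, rev_app_distr. reflexivity.
Qed.

Lemma rev_concat_map_rev {A B} (f : A -> list B) l :
  rev (concat (map f (rev l))) = concat (map (fun a => rev (f a)) l).
Proof.
  induction l as [|a l IH]; [reflexivity|].
  cbn [rev]. rewrite map_app, concat_app, rev_app_distr, IH. cbn. now rewrite app_nil_r.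
Qed.

Lemma Vpp_rev k : Vpp k = rev (Vp k).
Proof. unfold Vpp, Vp, UtR. now rewrite rev_concat_map_rev. Qed.

Lemma sweep_Vp n c t : Z.Even t -> 0 <= t <= 2 * 2 ^ Z.of_nat n - 2 ->
  exists ss, sweep (Vp (S n)) ss (c, 2 ^ Z.of_nat n - 1) (c, t) (box c c 0 (2 * 2 ^ Z.of_nat n - 2)).
Proof.
  revert t; induction n as [|n IH]; intros t He Ht.
  - exists []. cbn in Ht |- *. replace t with 0 by lia.
    eapply sweep_ext; [|apply sweep_nil]. solve_cells.
  - rewrite pow2_succ in *. pose proof (pow2_ge_1 n) as HN.
    set (N := 2 ^ Z.of_nat n) in *.
    assert (Hlow : forall t, Z.Even t -> 0 <= t <= 2 * N - 2 ->
      exists ss, sweep (Vp (S (S n))) ss (c, N + N - 1) (c, t) (box c c 0 (2 * (2 * N) - 2))).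
    { clear t He Ht. intros t He Ht.
      destruct (IH t He Ht) as [ss Hsw].
      set (M := (Nat.pow 2 (S n) - 1)%nat).
      exists (repeat true M ++ false :: ss).
      rewrite Vp_succ_succ, Ut_succ, <- app_assoc.
      eapply sweep_join; [apply sweep_units| |exact Hsw| |].
      - unfold M. rewrite step_vertical, of_nat_pow2_pred, pow2_succ. fold N.
        f_equal. cbn [sgn]. ring.
      - solve_cells.
      - unfold M; rewrite of_nat_pow2_pred, pow2_succ; fold N. solve_cells. }
    replace (2 * N - 1) with (N + N - 1) by lia.
    destruct (Z_le_gt_dec t (2 * N - 2)) as [Hle|Hgt]; [apply Hlow; auto; lia|].
    (* reflect the lower-half case through the middle cell *)
    destruct He as [h ->].
    destruct (Hlow (2 * (2 * N - 1 - h))) as [ss Hsw]; [now exists (2 * N - 1 - h)|lia|].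
    exists (map negb ss).
    apply (sweep_reflect (2 * c, 4 * N - 2)) in Hsw.
    replace (reflect (2 * c, 4 * N - 2) (c, N + N - 1)) with (c, N + N - 1) in Hsw
      by (unfold reflect; cbn [fst snd]; f_equal; lia).
    replace (reflect (2 * c, 4 * N - 2) (c, 2 * (2 * N - 1 - h))) with (c, 2 * h) in Hsw
      by (unfold reflect; cbn [fst snd]; f_equal; lia).
    eapply sweep_ext; [|exact Hsw]. unfold reflect. solve_cells.
Qed.

Lemma sweep_Vpp n c t : Z.Even t -> 0 <= t <= 2 * 2 ^ Z.of_nat n - 2 ->
  exists ss, sweep (Vpp (S n)) ss (c, t) (c, 2 ^ Z.of_nat n - 1) (box c c 0 (2 * 2 ^ Z.of_nat n - 2)).
Proof.
  intros He Ht. destruct (sweep_Vp n c t He Ht) as [ss Hsw].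
  exists (map negb (rev ss)). rewrite Vpp_rev. now apply sweep_rev.
Qed.

Lemma length_Vp_lt_block k : (length (Vp k) < length (block k))%nat.
Proof. unfold block. rewrite length_app. cbn [length app]. lia. Qed.

Lemma sweep_block n c e : Z.Even e -> 0 <= e <= 2 * 2 ^ Z.of_nat n - 2 ->
  exists ss,
    sweep (block (S n)) ss (c, 2 ^ Z.of_nat n - 1) (c + 1, 2 ^ Z.of_nat n - 1)
      (box c (c + 1) 0 (2 * 2 ^ Z.of_nat n - 2)) /\
    forall x0, nth (length (Vp (S n))) (landings (c, 2 ^ Z.of_nat n - 1) (block (S n)) ss) x0
               = (c + 1, e).
Proof.
  intros He Ht.
  destruct (sweep_Vp n c e He Ht) as [ssA HA].
  destruct (sweep_Vpp n (c + 1) e He Ht) as [ssB HB].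
  exists (ssA ++ true :: ssB).
  change (block (S n)) with (Vp (S n) ++ (1, 0) :: Vpp (S n)).
  split.
  - eapply sweep_join; [exact HA|apply step_right|exact HB|solve_cells|solve_cells].
  - intro x0. destruct HA as (HlA & HqA & _).
    rewrite <- (Nat.add_0_r (length (Vp (S n)))), nth_landings_app_r, HqA by exact HlA.
    apply step_right.
Qed.

Definition blocks (k m : nat) : list jump := block k ++ concat (repeat ([(1, 0)] ++ block k) m).

Lemma blocks_succ k m : blocks k (S m) = block k ++ (1, 0) :: blocks k m.
Proof. reflexivity. Qed.

Lemma length_blocks k m :
  length (blocks k m) = (m * S (length (block k)) + length (block k))%nat.
Proof.
  induction m as [|m IH]; [unfold blocks; cbn; now rewrite app_nil_r|].
  rewrite blocks_succ, length_app. cbn [length]. rewrite IH. lia.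
Qed.

Lemma sweep_blocks n m c (rr : nat -> Z) :
  (forall i, (i <= m)%nat -> Z.Even (rr i) /\ 0 <= rr i <= 2 * 2 ^ Z.of_nat n - 2) ->
  exists ss,
    sweep (blocks (S n) m) ss (c, 2 ^ Z.of_nat n - 1) (c + 2 * Z.of_nat m + 1, 2 ^ Z.of_nat n - 1)
      (box c (c + 2 * Z.of_nat m + 1) 0 (2 * 2 ^ Z.of_nat n - 2)) /\
    forall i x0, (i <= m)%nat ->
      nth (i * S (length (block (S n))) + length (Vp (S n)))
          (landings (c, 2 ^ Z.of_nat n - 1) (blocks (S n) m) ss) x0 = (c + 2 * Z.of_nat i + 1, rr i).
Proof.
  revert c rr; induction m as [|m IH]; intros c rr Hrr.
  - destruct (Hrr 0%nat (le_n _)) as [He Ht].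
    destruct (sweep_block n c (rr 0%nat) He Ht) as [ss [Hsw Hmid]].
    exists ss. unfold blocks; cbn [repeat concat]. rewrite app_nil_r.
    split.
    + now replace (c + 2 * Z.of_nat 0 + 1) with (c + 1) by lia.
    + intros i x0 Hi. replace i with 0%nat by lia. rewrite Hmid. f_equal; lia.
  - destruct (Hrr 0%nat ltac:(lia)) as [He Ht].
    destruct (sweep_block n c (rr 0%nat) He Ht) as [ssA [HA HmidA]].
    destruct (IH (c + 2) (fun i => rr (S i))) as [ssB [HB HmidB]].
    { intros i Hi. apply Hrr. lia. }
    exists (ssA ++ true :: ssB). rewrite blocks_succ.
    split.
    + replace (c + 2 * Z.of_nat (S m) + 1) with (c + 2 + 2 * Z.of_nat m + 1) by lia.
      eapply sweep_join; [exact HA| |exact HB|solve_cells|solve_cells].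
      rewrite step_right. f_equal. ring.
    + destruct HA as (HlA & HqA & _). intros [|i] x0 Hi.
      * pose proof (length_Vp_lt_block (S n)).
        rewrite nth_landings_app_l, HmidA by (exact HlA || lia).
        f_equal; lia.
      * replace (S i * S (length (block (S n))) + length (Vp (S n)))%nat
          with (length (block (S n)) + S (i * S (length (block (S n))) + length (Vp (S n))))%nat
          by lia.
        rewrite nth_landings_app_r, HqA by exact HlA.
        cbn [landings nth].
        rewrite step_right. replace (c + 1 + 1) with (c + 2) by ring.
        rewrite HmidB by lia. f_equal; lia.
Qed.

Lemma Vt_blocks k :
  Vt k = (0, vZ k) :: blocks k (vN k - 1) ++ [(0, vZ k); (2 * vZ k - 1, 0)].
Proof. unfold Vt, blocks. now rewrite <- app_assoc. Qed.

Lemma vN_succ n : vN (S n) = Nat.pow 2 n.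
Proof. unfold vN. f_equal. lia. Qed.

Lemma vZ_succ n : vZ (S n) = 2 ^ Z.of_nat n.
Proof. unfold vZ. now rewrite vN_succ, Nat2Z.inj_pow. Qed.

Lemma wZ_succ n : wZ (S n) = 2 * 2 ^ Z.of_nat n - 1.
Proof. unfold wZ. now rewrite pow2_succ. Qed.

Lemma sweep_Vt k (rr : nat -> Z) : (1 <= k)%nat ->
  (forall i, (1 <= i <= vN k)%nat -> Z.Even (rr i) /\ 0 <= rr i <= wZ k - 1) ->
  exists ss,
    sweep (Vt k) ss start (0, wZ k)
      (fun x => x = start \/ box 0 (2 * vZ k - 1) 0 (wZ k - 1) x \/
                x = (2 * vZ k - 1, wZ k) \/ x = (0, wZ k)) /\
    forall i, (1 <= i <= vN k)%nat ->
      snd (nth (mid_index k i) (landings start (Vt k) ss) start) = rr i.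
Proof.
  destruct k as [|n]; [lia|]. intros _ Hrr.
  rewrite Vt_blocks, vN_succ, vZ_succ, wZ_succ in *. unfold mid_index.
  pose proof (pow2_ge_1 n) as HN. pose proof (of_nat_pow2_pred n) as Hm.
  set (N := 2 ^ Z.of_nat n) in *. set (m := (Nat.pow 2 n - 1)%nat) in *.
  destruct (sweep_blocks n m 0 (fun i => rr (S i))) as [ss [Hsw Hmid]].
  { intros i Hi. fold N. destruct (Hrr (S i)); [|split; auto; lia].
    unfold m in Hi. pose proof (Nat.pow_nonzero 2 n). lia. }
  fold N in Hsw, Hmid. rewrite Hm in Hsw.
  exists ([] ++ true :: ss ++ true :: [] ++ false :: []).
  change ((0, N) :: blocks (S n) m ++ [(0, N); (2 * N - 1, 0)]) with
    ([] ++ (0, N) :: blocks (S n) m ++ (0, N) :: [] ++ (2 * N - 1, 0) :: []).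
  assert (Htail : sweep ([] ++ (2 * N - 1, 0) :: []) ([] ++ false :: [])
                   (2 * N - 1, 2 * N - 1) (0, 2 * N - 1)
                   (fun x => x = (2 * N - 1, 2 * N - 1) \/ x = (0, 2 * N - 1))).
  { eapply sweep_join; [apply sweep_nil| |apply sweep_nil|solve_cells|reflexivity].
    unfold step; cbn [fst snd sgn]. f_equal; ring. }
  assert (Hcols : sweep (blocks (S n) m ++ (0, N) :: [] ++ (2 * N - 1, 0) :: [])
                    (ss ++ true :: [] ++ false :: []) (0, N - 1) (0, 2 * N - 1)
                    (fun x => box 0 (2 * N - 1) 0 (2 * N - 1 - 1) x \/
                              x = (2 * N - 1, 2 * N - 1) \/ x = (0, 2 * N - 1))).
  { eapply sweep_join; [exact Hsw| |exact Htail|solve_cells|solve_cells].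
    rewrite step_vertical. f_equal; cbn [sgn]; lia. }
  split.
  - eapply sweep_join; [apply sweep_nil| |exact Hcols|unfold start; solve_cells..].
    unfold start. rewrite step_vertical. f_equal. cbn [sgn]. ring.
  - intros i Hi. destruct Hsw as (Hl & _).
    replace (1 + (i - 1) * (length (block (S n)) + 1) + length (Vp (S n)))%nat
      with (S ((i - 1) * S (length (block (S n))) + length (Vp (S n)))) by lia.
    cbn [app landings nth]. unfold start. rewrite step_vertical.
    replace (0, -1 + sgn true * N) with (0, N - 1) by (f_equal; cbn [sgn]; ring).
    pose proof (length_Vp_lt_block (S n)).
    rewrite nth_landings_app_l, Hmid by (exact Hl || (rewrite ?length_blocks; unfold m in *; nia)).
    cbn [snd]. f_equal. lia.
Qed.

Theorem mainTheorem10 (k : nat) (hk : (2 <= k)%nat) (r : nat -> Z)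
  (hr_even : forall i, (1 <= i <= vN k)%nat -> Z.Even (r i))
  (hr_range : forall i, (1 <= i <= vN k)%nat -> 0 <= r i <= wZ k - 1)
  (hr_dist : forall i j, (1 <= i <= vN k)%nat -> (1 <= j <= vN k)%nat ->
               i <> j -> r i <> r j) :
  exists ss : list bool,
    valid_exec (avail k) [start] start (Vt k) ss /\
    (forall i, (1 <= i <= vN k)%nat ->
       snd (nth (mid_index k i) (landings start (Vt k) ss) start) = r i) /\
    (forall c rr, 0 <= c < 2 * vZ k -> 0 <= rr < wZ k ->
       In (c, rr) (start :: landings start (Vt k) ss)) /\
    In (2 * vZ k - 1, wZ k) (start :: landings start (Vt k) ss) /\
    last (landings start (Vt k) ss) start = (0, wZ k).
Proof.
  destruct (sweep_Vt k r) as [ss [Hsw Hmid]]; [lia|intros; auto|].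
  assert (Hw : wZ k = 2 * vZ k - 1).
  { destruct k as [|n]; [lia|]. rewrite wZ_succ, vZ_succ. reflexivity. }
  assert (Hv : 1 <= vZ k) by (unfold vZ, vN; pose proof (Nat.pow_nonzero 2 (k - 1)); lia).
  exists ss. split; [|split; [exact Hmid|]].
  - eapply valid_exec_of_sweep; [exact Hsw|]. unfold avail, start. cbv zeta. rewrite Hw.
    solve_cells.
  - destruct Hsw as (_ & Hlast & _ & Hcells).
    change (start :: landings start (Vt k) ss) with (trail start (Vt k) ss).
    split; [|split; [|exact Hlast]]; [intros c rr Hc Hr| ]; apply Hcells.
    + right; left. unfold box; cbn [fst snd]. lia.
    + right; right; left. reflexivity.
Qed.
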